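(* Let $n\ge 3$ and $\varphi$ a linear functional with $\varphi(e_i)=a_i$, $0<a_1<\dots<a_n$. The flip graph of $\varphi$-monotone paths on $\diamond^n$ has diameter $2(n-1)$.
   Context: $\diamond^n=\mathrm{conv}\{\pm e_1,\dots,\pm e_n\}$. A monotone path is a sequence of vertices $-e_n=v_0,\dots,v_m=e_n$ with $v_{j-1}\neq -v_j$ and $\varphi(v_{j-1})<\varphi(v_j)$. The flip graph has the monotone paths as vertices, two paths being adjacent when they differ by a polygon flip across a 2-face; since the 2-faces of $\diamond^n$ ($n\ge3$) are triangles, this means one path is obtained from the other by inserting or deleting a single vertex. *)

From mathcomp Require Import all_boot all_order all_algebra.
Set Implicit Arguments. Unset Strict Implicit. Unset Printing Implicit Defensive.
Import Order.TTheory GRing.Theory Num.Theory.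
Local Open Scope ring_scope.

(* Vertices of the cross-polytope conv{±e_1,...,±e_n}: a vertex is (b, i)
   with (true, i) = +e_(i+1) and (false, i) = -e_(i+1) (0-based index i). *)
Definition cvert (n : nat) : Type := (bool * 'I_n)%type.

Definition opp_v (n : nat) (v : cvert n) : cvert n := (~~ v.1, v.2).

Definition phi (R : numDomainType) (n : nat) (a : 'I_n -> R) (v : cvert n) : R :=
  if v.1 then a v.2 else - a v.2.

Definition mstep (R : numDomainType) (n : nat) (a : 'I_n -> R) (u v : cvert n) : bool :=
  (phi a u < phi a v) && (u != opp_v v).

Definition is_en (n : nat) (b : bool) (v : cvert n) : bool :=
  (v.1 == b) && (val v.2 == n.-1)%N.

Definition cp_mono_path (R : numDomainType) (n : nat) (a : 'I_n -> R)
  (p : seq (cvert n)) : Prop :=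
  match p with
  | [::] => False
  | v0 :: p' => [/\ is_en false v0, is_en true (last v0 p') & path (mstep a) v0 p']
  end.

Definition insert1 (n : nat) (p q : seq (cvert n)) : Prop :=
  exists (i : nat) (x : cvert n), q = take i p ++ x :: drop i p.

(* adjacency in the flip graph (triangle flips = insertion/deletion of one vertex) *)
Definition flip_adj (n : nat) (p q : seq (cvert n)) : Prop :=
  insert1 p q \/ insert1 q p.

(* a walk p = s_0, s_1, ..., s_k = q in the flip graph (all s_j monotone
   paths); its length is k = size s *)
Fixpoint flip_walk_from (R : numDomainType) (n : nat) (a : 'I_n -> R)
  (p : seq (cvert n)) (s : seq (seq (cvert n))) (q : seq (cvert n)) : Prop :=
  match s with
  | [::] => p = q
  | p1 :: s' => [/\ cp_mono_path a p1, flip_adj p p1 & flip_walk_from a p1 s' q]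
  end.

Definition flip_walk (R : numDomainType) (n : nat) (a : 'I_n -> R)
  (p : seq (cvert n)) (s : seq (seq (cvert n))) (q : seq (cvert n)) : Prop :=
  cp_mono_path a p /\ flip_walk_from a p s q.

From mathcomp Require Import all_boot all_order all_algebra.
From mathcomp Require Import zify.
Import Order.TTheory GRing.Theory Num.Theory.
Local Open Scope ring_scope.
Set Implicit Arguments. Unset Strict Implicit.

(* Write n = n'.+1 and say that ±e_(i+1) has level i.  The functional orders
   the vertices as -e_n < ... < -e_1 < e_1 < ... < e_n, so a monotone path is
   determined by its vertex set A, listed in increasing order (path_of A).
   Consecutive vertices must not be antipodal, and the vertices strictly
   between -e_i and e_i are exactly those of lower level; hence the vertex sets
   of monotone paths are the admissible sets: they contain ±e_n and exactly one
   vertex of their lowest level (admissible_mono, mono_admissible).  A flip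
   inserts or deletes one vertex, i.e. toggles one element of A.

   Upper bound (flip_distance_le): between admissible sets with a common base
   level, the differences above it can be toggled in any order (reach_above).
   If the level-0 vertices of A and B are compatible, add the common level-0
   vertex, adjust the 2(n'-1) vertices of levels 1..n'-1 and remove it again
   (reach_compatible); if they are antipodal, travel through a set whose base
   vertex lies on level 1 (reach_opposite_bases).
   Lower bound (flip_distance_ge): a flip changes the number of positive minus
   the number of negative non-top vertices by at most one, and this number
   goes from -n' to n' between the all-negative and the all-positive path. *)

Section StrictPaths.
Variables (T : eqType) (lt : rel T).
Hypotheses (lt_trans : transitive lt) (lt_irr : irreflexive lt).

Lemma path_last_max (x : T) (s : seq T) (u : T) : path lt x s ->
  u \in x :: s -> u != last x s -> lt u (last x s).
Proof.
elim: s x => [|y s IH] x /=; first by rewrite inE => _ /eqP ->; rewrite eqxx.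
move=> /andP[xy ys]; rewrite inE => /predU1P[-> _|uys]; last exact: IH.
case: (predU1P (mem_last y s)) => [-> //|ls].
exact: lt_trans xy (allP (order_path_min lt_trans ys) _ ls).
Qed.

Lemma path_avoid (bad : rel T) (x : T) (s : seq T) : path lt x s ->
  (forall u v, u \in x :: s -> v \in x :: s -> lt u v -> bad u v ->
     exists2 w, w \in x :: s & lt u w && lt w v) ->
  path [rel u v | lt u v && ~~ bad u v] x s.
Proof.
elim: s x => [//|y s IH] x /= /andP[xy ys] gap.
have y_min := order_path_min lt_trans ys.
have x_min : all (lt x) (y :: s).
  by rewrite /= xy (sub_all _ y_min) // => w; exact: lt_trans.
rewrite xy /=; apply/andP; split.
  apply/negP => bxy.
  have [w] := gap x y (mem_head x _) (@mem_behead _ (x :: _) _ (mem_head y s)) xy bxy.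
  rewrite inE => /predU1P[->|]; first by rewrite lt_irr.
  rewrite inE => /predU1P[->|ws]; first by rewrite lt_irr andbF.
  by move=> /andP[_ wy]; have := lt_trans (allP y_min w ws) wy; rewrite lt_irr.
apply: IH => // u v uin vin uv buv.
have [w] := gap u v (@mem_behead _ (x :: _) _ uin) (@mem_behead _ (x :: _) _ vin) uv buv.
rewrite inE => /predU1P[-> /andP[ux _]|]; last by exists w.
by have := lt_trans (allP x_min u uin) ux; rewrite lt_irr.
Qed.

Lemma path_consecutive (r : rel T) (x : T) (s : seq T) (u v : T) :
  subrel r lt -> path r x s -> u \in x :: s -> v \in x :: s -> lt u v ->
  (forall w, w \in x :: s -> ~~ (lt u w && lt w v)) -> r u v.
Proof.
move=> r_lt; elim: s x => [|y s IH] x /=.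
  by rewrite !inE => _ /eqP-> /eqP->; rewrite lt_irr.
move=> /andP[rxy ys] uin vin uv nogap.
have x_min : all (lt x) (y :: s).
  by apply: order_path_min lt_trans _; rewrite /= r_lt //= (sub_path r_lt ys).
move: uin; rewrite inE => /predU1P[eu|uys].
  subst u; move: vin; rewrite !inE => /predU1P[ev|/predU1P[-> //|vs]].
    by move: uv; rewrite ev lt_irr.
  have := nogap y (@mem_behead _ (x :: _) _ (mem_head y s)).
  by rewrite r_lt //= (allP (order_path_min lt_trans (sub_path r_lt ys)) v vs).
move: vin; rewrite inE => /predU1P[ev|vys].
  by subst v; have := lt_trans (allP x_min u uys) uv; rewrite lt_irr.
by apply: IH vys uv _ => // w wys; apply: nogap; exact: (@mem_behead _ (x :: _)).
Qed.

End StrictPaths.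

Section CrossPolytope.
Variables (R : realFieldType) (n' : nat) (a : 'I_n'.+1 -> R).
Hypothesis a_pos : forall i, 0 < a i.
Hypothesis a_incr : forall i j : 'I_n'.+1, (i < j)%N -> a i < a j.
Local Notation n := n'.+1.
Local Notation V := (cvert n).
Local Notation top := (@ord_max n').

Definition ltp : rel V := fun u v => phi a u < phi a v.

Lemma ltp_trans : transitive ltp.
Proof. by move=> v u w; exact: lt_trans. Qed.

Lemma ltp_irr : irreflexive ltp.
Proof. by move=> v; rewrite /ltp ltxx. Qed.

Lemma a_ltE (i j : 'I_n) : (a i < a j) = (i < j)%N.
Proof.
case: (ltngtP i j) => [/a_incr -> //|/a_incr/lt_gtF -> //|/val_inj ->].
by rewrite ltxx.
Qed.

Lemma ltp_neg_pos (i j : 'I_n) : ltp (false, i) (true, j).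
Proof. by rewrite /ltp /phi /=; apply: (@lt_trans _ _ 0); rewrite ?oppr_lt0. Qed.

Lemma ltp_pos (i j : 'I_n) : ltp (true, i) (true, j) = (i < j)%N.
Proof. exact: a_ltE. Qed.

Lemma ltp_neg (i j : 'I_n) : ltp (false, i) (false, j) = (j < i)%N.
Proof. by rewrite /ltp /phi /= ltrN2 a_ltE. Qed.

Lemma ltp_between (i : 'I_n) (w : V) :
  ltp (false, i) w && ltp w (true, i) = (w.2 < i)%N.
Proof.
case: w => [[] j] /=; rewrite ?ltp_pos ?ltp_neg ltp_neg_pos //.
by rewrite andbT.
Qed.

Lemma ltp_bottom (v : V) : ltp v (false, top) = false.
Proof.
case: v => [[] i]; first exact/lt_gtF/ltp_neg_pos.
by rewrite ltp_neg ltnNge leq_ord.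
Qed.

Lemma ltp_top (v : V) : ltp (true, top) v = false.
Proof.
case: v => [[] i]; last exact/lt_gtF/ltp_neg_pos.
by rewrite ltp_pos ltnNge leq_ord.
Qed.

Definition all_vertices : seq V :=
  [seq (false, i) | i <- rev (enum 'I_n)] ++ [seq (true, i) | i <- enum 'I_n].

Lemma all_vertices_sorted : sorted ltp all_vertices.
Proof.
have ltn_enum : pairwise (fun i j : 'I_n => (i < j)%N) (enum 'I_n).
  by have := iota_ltn_sorted 0 n; rewrite -val_enum_ord (sorted_pairwise ltn_trans) pairwise_map.
rewrite (sorted_pairwise ltp_trans) pairwise_cat; apply/and3P; split.
- by apply/allrelP => _ _ /mapP[i _ ->] /mapP[j _ ->]; exact: ltp_neg_pos.
- rewrite -(sorted_pairwise ltp_trans) sorted_map rev_sorted.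
  by apply: sub_sorted (pairwise_sorted ltn_enum) => i j /=; rewrite ltp_neg.
- by rewrite pairwise_map; apply: sub_pairwise ltn_enum => i j /=; rewrite ltp_pos.
Qed.

Lemma mem_all_vertices (v : V) : v \in all_vertices.
Proof.
case: v => [[] i]; rewrite mem_cat; apply/orP; [right|left];
  by apply/mapP; exists i; rewrite ?mem_rev ?mem_enum.
Qed.

Lemma all_vertices_uniq : uniq all_vertices.
Proof. exact: (sorted_uniq ltp_trans ltp_irr all_vertices_sorted). Qed.

Definition path_of (A : {set V}) : seq V := [seq v <- all_vertices | v \in A].

Lemma path_of_sorted (A : {set V}) : sorted ltp (path_of A).
Proof. exact: (sorted_filter ltp_trans _ all_vertices_sorted). Qed.

Lemma mem_path_of (A : {set V}) (v : V) : (v \in path_of A) = (v \in A).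
Proof. by rewrite mem_filter mem_all_vertices andbT. Qed.

Lemma path_of_setU1 (A : {set V}) (x : V) :
  x \notin A -> insert1 (path_of A) (path_of (x |: A)).
Proof.
move=> xA; rewrite /insert1 /path_of.
have := all_vertices_uniq; have := mem_all_vertices x.
move: all_vertices => L /splitPr [L1 L2].
rewrite cat_uniq /= => /and4P[_ /norP[xL1 _] xL2 _].
have drop_x L' : x \notin L' -> [seq y <- L' | y \in x |: A] = [seq y <- L' | y \in A].
  move=> xL'; apply: eq_in_filter => y yL'; rewrite in_setU1.
  by case: eqP => // eyx; rewrite -eyx yL' in xL'.
exists (size [seq y <- L1 | y \in A]), x.
rewrite !filter_cat /= setU11 (negbTE xA) !drop_x //.
by rewrite take_size_cat // drop_size_cat.
Qed.

(* A vertex set is admissible with base level m when it contains -e_n and e_n,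
   exactly one of -e_m, e_m, and no vertex of level below m.  These are exactly
   the vertex sets of monotone paths. *)
Definition admissible (m : 'I_n) (A : {set V}) : Prop :=
  [/\ (false, top) \in A, (true, top) \in A,
      ((false, m) \in A) != ((true, m) \in A) &
      forall v : V, v \in A -> (m <= v.2)%N].

Lemma base_vertex_in (m : 'I_n) (A : {set V}) :
  admissible m A -> ((true, m) \in A, m) \in A.
Proof.
case=> _ _ single _; case E: ((true, m) \in A) => //.
by move: single; rewrite E; case: ((false, m) \in A).
Qed.

(* an admissible set is the vertex set of a monotone path: -e_n comes first,
   e_n last, and any -e_i, e_i both present are separated by the base vertex *)
Lemma admissible_mono (m : 'I_n) (A : {set V}) :
  admissible m A -> cp_mono_path a (path_of A).
Proof.
move=> adm; have [bot_in top_in single above] := adm.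
have srt := path_of_sorted A.
case E: (path_of A) srt => [|v0 s] srt; first by rewrite -mem_path_of E in bot_in.
have memE v : (v \in v0 :: s) = (v \in A) by rewrite -E mem_path_of.
split.
- case/predU1P: (etrans (memE _) bot_in) => [<-|bot_s]; first by rewrite /is_en /= !eqxx.
  by have := allP (order_path_min ltp_trans srt) _ bot_s; rewrite ltp_bottom.
- have := path_last_max ltp_trans srt (etrans (memE _) top_in).
  case: eqP => [<- _|_ /(_ isT)]; last by rewrite ltp_top.
  by rewrite /is_en /= !eqxx.
- apply: (sub_path _ (path_avoid ltp_trans ltp_irr (bad := fun u v => u == opp_v v) srt _)).
    by [].
  move=> u [[] i] uin vin uv /eqP eu; subst u; last first.
    by rewrite /= /ltp (lt_gtF (ltp_neg_pos i i)) in uv.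
  rewrite !memE in uin vin.
  have lt_mi : (m < i)%N.
    rewrite ltn_neqAle (above _ vin) andbT; apply/eqP => /val_inj emi.
    by move: single; rewrite emi uin vin.
  exists ((true, m) \in A, m); first by rewrite memE base_vertex_in.
  by rewrite ltp_between.
Qed.

Lemma is_enP (b : bool) (v : V) : is_en b v -> v = (b, top).
Proof. by case: v => c i /andP[/eqP /= -> /eqP ei]; congr pair; apply: val_inj. Qed.

Lemma mono_admissible (p : seq V) : cp_mono_path a p ->
  p = path_of [set v in p] /\ exists m, admissible m [set v in p].
Proof.
case: p => [//|v0 s] [bot_v0 top_last mono].
have mono_ltp : subrel (mstep a) ltp by move=> u v /andP[].
have srt : sorted ltp (v0 :: s) := sub_path mono_ltp mono.
split.
  apply: (irr_sorted_eq ltp_trans ltp_irr srt (path_of_sorted _)) => v.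
  by rewrite mem_path_of in_set.
pose at_level j := has (fun v : V => val v.2 == j) (v0 :: s).
have ex_level : exists j, at_level j by exists (val v0.2); rewrite /at_level /= eqxx.
case: (ex_minnP ex_level) => _ /hasP[[b m] vin /= /eqP <-] min_level.
have above v : v \in v0 :: s -> (m <= v.2)%N.
  by move=> vin'; apply: min_level; apply/hasP; exists v.
(* -e_m and e_m cannot both occur: nothing lies between them, so they would be
   consecutive, but consecutive vertices are not antipodal *)
have not_both : ~~ (((false, m) \in v0 :: s) && ((true, m) \in v0 :: s)).
  apply/andP => -[fin tin].
  have nothing_between w : w \in v0 :: s -> ~~ (ltp (false, m) w && ltp w (true, m)).
    by move=> win; rewrite ltp_between -leqNgt above.
  have /andP[_] := path_consecutive ltp_trans ltp_irr mono_ltp mono fin tin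
    (ltp_neg_pos m m) nothing_between.
  by rewrite eqxx.
exists m; split; rewrite ?in_set.
- by rewrite -(is_enP bot_v0) mem_head.
- by rewrite -(is_enP top_last) mem_last.
- by case: b vin => vin; move: not_both; rewrite vin ?andbT //= => /negbTE ->.
- by move=> v; rewrite in_set => /above.
Qed.

Lemma flip_walk_cat (p q r : seq V) (s t : seq (seq V)) :
  flip_walk_from a p s q -> flip_walk_from a q t r -> flip_walk_from a p (s ++ t) r.
Proof.
elim: s p => [|p1 s IH] p /=; first by move=> ->.
by case=> mono1 adj1 w1 w2; split => //; apply: IH.
Qed.

Definition reach (A B : {set V}) (d : nat) : Prop :=
  exists2 s, flip_walk_from a (path_of A) s (path_of B) & (size s <= d)%N.

Lemma reach_refl (A : {set V}) : reach A A 0.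
Proof. by exists [::]. Qed.

Lemma reach_trans (A B C : {set V}) (d1 d2 : nat) :
  reach A B d1 -> reach B C d2 -> reach A C (d1 + d2).
Proof.
move=> [s w1 le1] [t w2 le2]; exists (s ++ t); first exact: flip_walk_cat w1 w2.
by rewrite size_cat leq_add.
Qed.

Lemma reach_le (A B : {set V}) (d d' : nat) : (d <= d')%N -> reach A B d -> reach A B d'.
Proof. by move=> le_dd' [s w le_sd]; exists s; last exact: leq_trans le_dd'. Qed.

Definition toggle (x : V) (A : {set V}) : {set V} := if x \in A then A :\ x else x |: A.

Lemma in_toggle (x v : V) (A : {set V}) :
  (v \in toggle x A) = (if v == x then x \notin A else v \in A).
Proof.
rewrite /toggle; case: ifP => xA; rewrite !inE; case: eqP => // ->; by rewrite xA.
Qed.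

Lemma toggle_flip (x : V) (A : {set V}) : flip_adj (path_of A) (path_of (toggle x A)).
Proof.
rewrite /toggle; case: ifP => xA; last by left; apply: path_of_setU1; rewrite xA.
by right; rewrite -{2}(setD1K xA); apply: path_of_setU1; rewrite setD11.
Qed.

Lemma reach_toggle (m : 'I_n) (x : V) (A : {set V}) :
  admissible m (toggle x A) -> reach A (toggle x A) 1.
Proof.
move=> adm; exists [:: path_of (toggle x A)] => //.
by split; [exact: admissible_mono adm|exact: toggle_flip|].
Qed.

Lemma reach_setU1 (m : 'I_n) (x : V) (A : {set V}) :
  admissible m (x |: A) -> reach A (x |: A) (x \notin A).
Proof.
case: (boolP (x \in A)) => xA adm.
  have /setUidPr -> : [set x] \subset A by rewrite sub1set.
  exact: reach_refl.
by have := @reach_toggle m x A; rewrite /toggle (negbTE xA); apply.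
Qed.

Lemma reach_setU1_back (m : 'I_n) (x : V) (B : {set V}) :
  admissible m B -> reach (x |: B) B (x \notin B).
Proof.
case: (boolP (x \in B)) => xB adm.
  have /setUidPr -> : [set x] \subset B by rewrite sub1set.
  exact: reach_refl.
by have := @reach_toggle m x (x |: B); rewrite /toggle setU11 setU1K //; apply.
Qed.

Lemma admissible_toggle (m : 'I_n) (A : {set V}) (y : V) :
  admissible m A -> (m < y.2 < n')%N -> admissible m (toggle y A).
Proof.
case=> bot_in top_in single above /andP[lt_my lt_yn].
have ne_y (v : V) : ((v.2 <= m) || (n' <= v.2))%N -> (v == y) = false.
  by move=> lev; apply/negbTE; apply: contraTneq lev => ->; rewrite negb_or -!ltnNge lt_my.
split; rewrite ?in_toggle ?ne_y ?leqnn ?orbT //.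
by move=> v; rewrite in_toggle; case: eqP => [-> _|_ /above //]; exact: ltnW.
Qed.

Definition differ (A B : {set V}) : pred V := fun v => (v \in A) != (v \in B).

Lemma differ_below_top (mA mB : 'I_n) (A B : {set V}) (v : V) :
  admissible mA A -> admissible mB B -> differ A B v -> (v.2 < n')%N.
Proof.
case=> botA topA _ _ [botB topB _ _]; case: v => b i; rewrite ltn_neqAle leq_ord andbT.
apply: contraTneq => /= ei; have -> : i = top by apply: val_inj.
by case: b; rewrite /differ ?botA ?botB ?topA ?topB.
Qed.

(* Two admissible sets with the same base level that agree up to that level
   are joined by toggling their differences one at a time: every intermediate
   set keeps the base level, hence stays admissible. *)
Lemma reach_above (m : 'I_n) (A B : {set V}) (l : seq V) :
  admissible m A -> admissible m B ->
  (forall v : V, (v.2 <= m)%N -> (v \in A) = (v \in B)) ->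
  (forall v, differ A B v -> v \in l) -> reach A B (count (differ A B) l).
Proof.
elim: l A => [|y l IH] A admA admB agree cover.
  have -> : A = B by apply/setP => v; apply/eqP/negPn/negP => /cover.
  exact: reach_refl.
case: (boolP (differ A B y)) => [dy|same_y] /=; last first.
  rewrite (negbTE same_y) add0n.
  apply: IH => // v dv; have := cover v dv; rewrite inE => /predU1P[ey|//].
  by rewrite ey in dv; case/negP: same_y.
have lt_my : (m < y.2)%N by rewrite ltnNge; apply: contra dy => /agree ->; rewrite /differ eqxx.
have mid_y : (m < y.2 < n')%N by rewrite lt_my (differ_below_top admA admB dy).
have admA' := admissible_toggle admA mid_y.
have sub_differ : subpred (differ (toggle y A) B) (differ A B).
  move=> v; rewrite /differ in_toggle; case: (v =P y) => [-> _|//].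
  by move: dy; rewrite /differ; case: (y \in A); case: (y \in B).
have agree' (v : V) : (v.2 <= m)%N -> (v \in toggle y A) = (v \in B).
  move=> lev; rewrite in_toggle; case: eqP => [ev|_]; last exact: agree.
  by rewrite ev leqNgt lt_my in lev.
have cover' (v : V) : differ (toggle y A) B v -> v \in l.
  move=> dv; have := cover v (sub_differ v dv); rewrite inE => /predU1P[ev|//].
  move: dv dy; rewrite ev /differ in_toggle eqxx.
  by case: (y \in A); case: (y \in B).
rewrite dy; apply: reach_le (reach_trans (reach_toggle admA') (IH _ admA' admB agree' cover')).
by rewrite add1n ltnS sub_count.
Qed.

Lemma admissible_level0 (m : 'I_n) (A : {set V}) (c : bool) :
  admissible m A -> (c, ord0) \in A -> (~~ c, ord0) \notin A.
Proof.
case=> _ _ single above cA; case: (posnP m) => [m0|m_pos]; last first.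
  by move: (above _ cA); rewrite /= leqn0 eqn0Ngt m_pos.
move: single cA; have -> : m = ord0 by apply: val_inj; exact: m0.
by case: c => /=; case: ((false, ord0) \in A); case: ((true, ord0) \in A).
Qed.

Lemma admissible_add_base (m : 'I_n) (A : {set V}) (c : bool) :
  admissible m A -> (~~ c, ord0) \notin A -> admissible ord0 ((c, ord0) |: A).
Proof.
case=> bot_in top_in _ _ nc; split; rewrite ?in_setU1 ?bot_in ?top_in ?orbT //.
by case: c nc => /negbTE nc; rewrite nc eqxx xpair_eqE /=.
Qed.

Lemma level0_member (c b : bool) (X : {set V}) :
  (~~ c, ord0) \notin X -> (b, ord0) \in X -> b = c.
Proof. by case: b; case: c => // /negP. Qed.

Definition band (lo : nat) : seq V :=
  [seq (b, inord i) | b <- [:: false; true], i <- iota lo (n' - lo)].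

Lemma size_band (lo : nat) : size (band lo) = (2 * (n' - lo))%N.
Proof. by rewrite size_allpairs size_iota. Qed.

Lemma mem_band (lo : nat) (v : V) : (lo <= v.2 < n')%N -> v \in band lo.
Proof.
case: v => b i /= /andP[lo_i i_n]; apply/allpairsP; exists (b, val i) => /=.
rewrite inord_val mem_iota lo_i subnKC; last exact: leq_trans lo_i (ltnW i_n).
by rewrite i_n; case: b.
Qed.

Lemma in_setU1_level0 (c b : bool) (C : {set V}) :
  (~~ c, ord0) \notin C -> ((b, ord0) \in (c, ord0) |: C) = (b == c).
Proof. by case: b; case: c => /negbTE nc; rewrite in_setU1 ?nc xpair_eqE eqxx /= ?orbF. Qed.

(* Two admissible sets whose level-0 vertices (if any) coincide with (c, 0):
   pass through the sets with (c, 0) added, which share base level 0. *)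
Lemma reach_common_base (c : bool) (mA mB : 'I_n) (A B : {set V}) (l : seq V) :
  admissible mA A -> admissible mB B ->
  (~~ c, ord0) \notin A -> (~~ c, ord0) \notin B ->
  (forall v, differ A B v -> v != (c, ord0) -> v \in l) ->
  reach A B (((c, ord0) \notin A) + count (differ A B) l + ((c, ord0) \notin B)).
Proof.
move=> admA admB ncA ncB cover.
have admA' := admissible_add_base admA ncA; have admB' := admissible_add_base admB ncB.
have agree (v : V) : (v.2 <= @ord0 n')%N -> (v \in (c, ord0) |: A) = (v \in (c, ord0) |: B).
  case: v => b i; rewrite leqn0 => /eqP i0; have -> : i = ord0 by apply: val_inj.
  by rewrite !in_setU1_level0.
have sub_differ : subpred (differ ((c, ord0) |: A) ((c, ord0) |: B)) (differ A B).
  by move=> v; rewrite /differ !in_setU1; case: (v == (c, ord0)).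
have cover' v : differ ((c, ord0) |: A) ((c, ord0) |: B) v -> v \in l.
  move=> dv; apply: cover; first exact: sub_differ.
  by apply: contraTneq dv => ->; rewrite /differ !setU11.
apply: reach_trans (reach_setU1_back _ admB).
apply: reach_trans (reach_setU1 admA') _.
exact: reach_le (sub_count sub_differ l) (reach_above admA' admB' agree cover').
Qed.

Lemma level0_cases (mA mB : 'I_n) (A B : {set V}) :
  admissible mA A -> admissible mB B ->
  (exists c, ((c, ord0) \in A) && ((~~ c, ord0) \in B)) \/
  (exists c, ((~~ c, ord0) \notin A) && ((~~ c, ord0) \notin B)).
Proof.
move=> admA admB.
move: (admissible_level0 (c := true) admA) (admissible_level0 (c := true) admB).
case fA: ((false, ord0) \in A); case tA: ((true, ord0) \in A);
case fB: ((false, ord0) \in B); case tB: ((true, ord0) \in B) => /= nA nB;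
by [case/negP: (nA isT) | case/negP: (nB isT)
   | left; exists true; rewrite /= tA fB | left; exists false; rewrite /= fA tB
   | right; exists true; rewrite /= fA fB | right; exists false; rewrite /= tA tB].
Qed.

(* Upper bound when some level-0 vertex (c, 0) is compatible with both sets:
   at most one flip to add it, 2(n'-1) flips above level 0, one to remove it. *)
Lemma reach_compatible (c : bool) (mA mB : 'I_n) (A B : {set V}) :
  (0 < n')%N -> admissible mA A -> admissible mB B ->
  (~~ c, ord0) \notin A -> (~~ c, ord0) \notin B -> reach A B (2 * n').
Proof.
move=> n'_pos admA admB ncA ncB.
have cover v : differ A B v -> v != (c, ord0) -> v \in band 1.
  case: v => b i dv ne; apply: mem_band; rewrite (differ_below_top admA admB dv) andbT /=.
  rewrite lt0n; apply: contraTneq ne => i0; move: dv; have -> : i = ord0 by apply: val_inj.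
  rewrite /differ; case: (boolP ((b, ord0) \in A)) => [/(level0_member ncA) -> _|_].
    by rewrite eqxx.
  by rewrite eq_sym eqbF_neg negbK => /(level0_member ncB) ->; rewrite eqxx.
apply: reach_le (reach_common_base admA admB ncA ncB cover).
have := count_size (differ A B) (band 1); rewrite size_band.
by case: ((c, ord0) \notin A); case: ((c, ord0) \notin B) => /=; lia.
Qed.

(* Sets with base level 1, used to switch between antipodal level-0 vertices;
   level 1 lies below the top level as soon as n' > 1. *)
Section Level1Base.
Hypothesis n'_gt1 : (1 < n')%N.

Definition lvl1 : 'I_n := inord 1.

Lemma lvl1E : nat_of_ord lvl1 = 1%N.
Proof. by rewrite inordK // ltnS ltnW. Qed.

Definition level1_vertices : seq V := [:: (false, lvl1); (true, lvl1)].

Lemma mem_level1_vertices (b : bool) (i : 'I_n) :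
  nat_of_ord i = 1%N -> (b, i) \in level1_vertices.
Proof.
move=> i1; have -> : i = lvl1 by apply: val_inj; rewrite /= i1 lvl1E.
by case: b; rewrite !inE eqxx ?orbT.
Qed.

Definition rebase1 (d : bool) (B : {set V}) : {set V} :=
  [set v | (v == (d, lvl1)) || (1 < v.2)%N && (v \in B)].

Lemma rebase1_level1 (b d : bool) (B : {set V}) :
  ((b, lvl1) \in rebase1 d B) = (b == d).
Proof. by rewrite in_set xpair_eqE eqxx andbT /= lvl1E ltnn andFb orbF. Qed.

Lemma rebase1_level0 (b d : bool) (B : {set V}) : (b, ord0) \notin rebase1 d B.
Proof. by rewrite in_set xpair_eqE -val_eqE /= lvl1E andbF. Qed.

Lemma rebase1_above (d : bool) (B : {set V}) (v : V) :
  (1 < v.2)%N -> (v \in rebase1 d B) = (v \in B).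
Proof.
case: v => b i lt1i; rewrite in_set xpair_eqE lt1i /=.
have ne1 : (i == lvl1) = false by apply/negbTE; rewrite -val_eqE /= lvl1E gtn_eqF.
by rewrite ne1 andbF.
Qed.

Lemma admissible_rebase1 (m : 'I_n) (d : bool) (B : {set V}) :
  admissible m B -> admissible lvl1 (rebase1 d B).
Proof.
case=> botB topB _ _; split; rewrite ?rebase1_level1 ?rebase1_above ?botB ?topB //.
  by case: d.
by move=> v; rewrite in_set => /orP[/eqP -> | /andP[/ltnW]]; rewrite lvl1E.
Qed.

Lemma level1_choice (A B : {set V}) : exists d,
  (count (differ A (rebase1 d B)) level1_vertices +
   count (differ (rebase1 d B) B) level1_vertices <= 2)%N.
Proof.
rewrite /level1_vertices /differ /=.
case: ((false, lvl1) \in A); case: ((true, lvl1) \in A);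
case: ((false, lvl1) \in B); case: ((true, lvl1) \in B);
by [exists true; rewrite !rebase1_level1 | exists false; rewrite !rebase1_level1].
Qed.

(* Upper bound when A and B have antipodal level-0 vertices (c, 0) and
   (~~ c, 0): pass through rebase1 d B, which has no level-0 vertex. *)
Lemma reach_opposite_bases (c : bool) (mA mB : 'I_n) (A B : {set V}) :
  admissible mA A -> admissible mB B ->
  (c, ord0) \in A -> (~~ c, ord0) \in B -> reach A B (2 * n').
Proof.
move=> admA admB cA cB; have [d cost1] := level1_choice A B.
have admC := admissible_rebase1 d admB.
have ncA := admissible_level0 admA cA; have ncB := admissible_level0 admB cB.
have notin0 b := rebase1_level0 b d B.
have coverAC v : differ A (rebase1 d B) v -> v != (c, ord0) -> v \in level1_vertices ++ band 2.
  case: v => b i dv ne; rewrite mem_cat.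
  case: (ltngtP i 1) => [|lt1i|/mem_level1_vertices -> //].
    rewrite ltnS leqn0 => /eqP i0; move: dv ne; have -> : i = ord0 by apply: val_inj.
    rewrite /differ (negbTE (notin0 _)) eqbF_neg negbK => /(level0_member ncA) ->.
    by rewrite eqxx.
  by rewrite mem_band ?orbT //= lt1i (differ_below_top admA admC dv).
have coverCB v : differ (rebase1 d B) B v -> v != (~~ c, ord0) -> v \in level1_vertices.
  case: v => b i dv ne; case: (ltngtP i 1) => [|lt1i|/mem_level1_vertices -> //].
    rewrite ltnS leqn0 => /eqP i0; move: dv ne; have -> : i = ord0 by apply: val_inj.
    rewrite /differ (negbTE (notin0 _)) eq_sym eqbF_neg negbK => /(level0_member ncB) ->.
    by rewrite eqxx.
  by rewrite /differ rebase1_above // eqxx in dv.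
apply: reach_le (reach_trans (reach_common_base admA admC ncA (notin0 _) coverAC)
                             (reach_common_base admC admB (notin0 _) ncB coverCB)).
have := count_size (differ A (rebase1 d B)) (band 2); rewrite size_band.
move: cost1; rewrite cA cB !(negbTE (notin0 _)) count_cat /=; lia.
Qed.

End Level1Base.

Lemma reach_admissible (mA mB : 'I_n) (A B : {set V}) :
  (1 < n')%N -> admissible mA A -> admissible mB B -> reach A B (2 * n').
Proof.
move=> n'_gt1 admA admB.
case: (level0_cases admA admB) => [[c /andP[cA cB]]|[c /andP[ncA ncB]]].
  exact: (reach_opposite_bases n'_gt1 admA admB cA cB).
exact: reach_compatible (ltnW n'_gt1) admA admB ncA ncB.
Qed.

Theorem flip_distance_le (p q : seq V) : (1 < n')%N ->
  cp_mono_path a p -> cp_mono_path a q ->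
  exists s, flip_walk a p s q /\ (size s <= 2 * n')%N.
Proof.
move=> n'_gt1 mono_p mono_q.
have [p_eq [mA admA]] := mono_admissible mono_p.
have [q_eq [mB admB]] := mono_admissible mono_q.
have [s walk le_s] := reach_admissible n'_gt1 admA admB.
by exists s; rewrite p_eq q_eq; split => //; split => //; exact: admissible_mono admA.
Qed.

Lemma insert1_count (p q : seq V) : insert1 p q ->
  exists x, forall P : pred V, count P q = (P x + count P p)%N.
Proof.
case=> i [x ->]; exists x => P.
by rewrite -[in RHS](cat_take_drop i p) !count_cat /= addnCA.
Qed.

Lemma walk_count (p q : seq V) (s : seq (seq V)) (P N : pred V) :
  flip_walk_from a p s q ->
  (count P q + count N p <= size s + count P p + count N q)%N.
Proof.
elim: s p => [|p1 s IH] p /=; first by move=> ->; rewrite addnC.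
case=> _ [] /insert1_count [x count_x] /IH; rewrite !count_x;
  case: (P x); case: (N x) => /=; lia.
Qed.

Lemma count_path_of (A : {set V}) (P : {set V}) : count (mem P) (path_of A) = #|A :&: P|.
Proof.
rewrite /path_of count_filter -size_filter.
have /card_uniqP <- := filter_uniq (predI (mem P) (mem A)) all_vertices_uniq.
by apply: eq_card => v; rewrite mem_filter mem_all_vertices !inE andbT andbC.
Qed.

Definition free_side (b : bool) : {set V} := [set v | (v.1 == b) && (v.2 != top)].

Lemma card_free_side (b : bool) : #|free_side b| = n'.
Proof.
have -> : free_side b = setX [set b] [set~ top] by apply/setP => -[c i]; rewrite !inE.
by rewrite cardsX cards1 cardsC1 card_ord mul1n.
Qed.

Definition side (b : bool) : {set V} := [set v | (v.1 == b) || (v.2 == top)].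

Lemma admissible_side (b : bool) : (0 < n')%N -> admissible ord0 (side b).
Proof.
move=> n'_pos; have ne0 : (ord0 == top) = false by rewrite -val_eqE /= eq_sym eqn0Ngt n'_pos.
by split; rewrite ?inE ?eqxx ?orbT ?ne0 //; case: b.
Qed.

Lemma card_side_free (b c : bool) : #|side b :&: free_side c| = if b == c then n' else 0%N.
Proof.
have [<-|ne] := eqVneq b c.
  rewrite (setIidPr _) ?card_free_side //.
  by apply/subsetP => v; rewrite !inE => /andP[->].
apply/eqP; rewrite cards_eq0; apply/eqP/setP => v; rewrite !inE.
case: eqP => [->|_]; rewrite ?(negbTE ne) //=.
by case: (v.2 == top); rewrite ?andbF.
Qed.

(* a walk from the negative side to the positive side must turn all n'
   negative free vertices out and all n' positive ones in *)
Theorem flip_distance_ge : (0 < n')%N ->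
  exists p q, [/\ cp_mono_path a p, cp_mono_path a q &
    forall s, flip_walk a p s q -> (2 * n' <= size s)%N].
Proof.
move=> n'_pos; exists (path_of (side false)), (path_of (side true)); split.
- exact: admissible_mono (admissible_side false n'_pos).
- exact: admissible_mono (admissible_side true n'_pos).
move=> s [_ /(walk_count (mem (free_side true)) (mem (free_side false)))].
by rewrite !count_path_of !card_side_free /=; lia.
Qed.

End CrossPolytope.

Theorem theorem1p1 (R : realFieldType) (n : nat) (a : 'I_n -> R) :
  (3 <= n)%N ->
  (forall i, 0 < a i) ->
  (forall i j : 'I_n, (i < j)%N -> a i < a j) ->
  (forall p q, cp_mono_path a p -> cp_mono_path a q ->
     exists s, flip_walk a p s q /\ (size s <= 2 * (n - 1))%N) /\
  (exists p q, [/\ cp_mono_path a p, cp_mono_path a q &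
     forall s, flip_walk a p s q -> (2 * (n - 1) <= size s)%N]).
Proof.
case: n a => [//|n'] a n_ge3 a_pos a_incr; rewrite subn1 /=.
have n'_gt1 : (1 < n')%N by [].
split; first by move=> p q; exact: (flip_distance_le a_pos a_incr n'_gt1).
exact: flip_distance_ge a_pos a_incr (ltnW n'_gt1).
Qed.
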